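(* Let $\pi_1:V_1\to X_1$, $\pi_2:V_2\to X_2$ be diffeological vector pseudo-bundles and $(\tilde f,f)$ a gluing of the former to the latter. Then $\mathcal{S}_1$ is a smooth map $C^\infty_{(f,\tilde f)}(X_1,V_1)\to C^\infty(X_1^f,V_1^{\tilde f})$, for the functional diffeologies (the first with the subset diffeology inside $C^\infty(X_1,V_1)$).
   Context: Diffeological spaces, smooth maps and quotient/subset diffeologies are as usual; $C^\infty(A,B)$ carries the functional diffeology: $q:U\to C^\infty(A,B)$ is a plot iff $(u,u')\mapsto q(u)(p(u'))$ is a plot of $B$ for every plot $p:U'\to A$. A diffeological vector pseudo-bundle $\pi:V\to X$ is a smooth surjection with vector space fibres whose fibrewise addition, scalar multiplication and zero section are smooth. A gluing $(\tilde f,f)$: $f:Y\to X_2$ smooth on $Y\subseteq X_1$, $\tilde f:\pi_1^{-1}(Y)\to V_2$ smooth, $\pi_2\circ\tilde f=f\circ\pi_1$, linear on fibres. A smooth section $s$ of $V_1$ is $(f,\tilde f)$-invariant if $\tilde f(s(y))=\tilde f(s(y'))$ whenever $y,y'\in Y$, $f(y)=f(y')$; $C^\infty_{(f,\tilde f)}(X_1,V_1)$ is the set of these. $X_1^f$ is the quotient of $X_1$ identifying $y,y'\in Y$ with $f(y)=f(y')$, and $V_1^{\tilde f}$ the quotient of $V_1$ identifying $v,v'\in\pi_1^{-1}(Y)$ with $\tilde f(v)=\tilde f(v')$, with quotient diffeologies and projections $\chi_1^f,\chi_1^{\tilde f}$; $\pi_1$ induces a pseudo-bundle $V_1^{\tilde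 f}\to X_1^f$. For $s_1\in C^\infty_{(f,\tilde f)}(X_1,V_1)$, $\mathcal{S}_1(s_1)$ is the unique smooth section of $V_1^{\tilde f}$ with $\mathcal{S}_1(s_1)\circ\chi_1^f=\chi_1^{\tilde f}\circ s_1$. *)

(* domains of plots are open subsets of R^n = 'rV[R]_n,
   R : realType. *)
From HB Require Import structures.
From mathcomp Require Import all_boot all_order all_algebra.
From mathcomp Require Import all_classical all_reals all_analysis.
Set Implicit Arguments. Unset Strict Implicit. Unset Printing Implicit Defensive.
Import Order.TTheory GRing.Theory Num.Theory.
Import numFieldNormedType.Exports.
Local Open Scope classical_set_scope.
Local Open Scope ring_scope.

Notation dom U := {x | U x}.

Section Diffeology.
Variable R : realType.


Fixpoint iter_deriv (n : nat) (W : normedModType R) (F : 'rV[R]_n -> W)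
    (vs : seq 'rV[R]_n) : 'rV[R]_n -> W :=
  match vs with
  | [::] => F
  | v :: vs' => fun x => derive (iter_deriv F vs') x v
  end.

Definition smooth_on (n : nat) (W : normedModType R) (U : set 'rV[R]_n)
    (F : 'rV[R]_n -> W) : Prop :=
  forall vs : seq 'rV[R]_n,
    (forall (v x : 'rV[R]_n), U x -> derivable (iter_deriv F vs) x v) /\
    (forall x, U x -> {for x, continuous (iter_deriv F vs)}).

Definition smooth_dom (n m : nat) (U : set 'rV[R]_n) (V : set 'rV[R]_m)
    (h : dom V -> dom U) : Prop :=
  exists F : 'rV[R]_m -> 'rV[R]_n,
    smooth_on V F /\ forall x : dom V, proj1_sig (h x) = F (proj1_sig x).

Definition plotpred (X : Type) :=
  forall (n : nat) (U : set 'rV[R]_n), (dom U -> X) -> Prop.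

Definition restr (X : Type) (n : nat) (U W : set 'rV[R]_n) (hWU : W `<=` U)
    (p : dom U -> X) : dom W -> X :=
  fun w => p (exist _ (proj1_sig w) (hWU _ (proj2_sig w))).

Unset Implicit Arguments.
Record diffeology (X : Type) := Diffeology {
  plot :> plotpred X ;
  plot_open : forall n (U : set 'rV[R]_n) p, plot n U p -> open U ;
  plot_const : forall n (U : set 'rV[R]_n) (x : X),
      open U -> plot n U (fun _ => x) ;
  plot_comp : forall n m (U : set 'rV[R]_n) (V : set 'rV[R]_m)
      (p : dom U -> X) (h : dom V -> dom U),
      open V -> plot n U p -> smooth_dom h -> plot m V (p \o h) ;
  plot_local : forall n (U : set 'rV[R]_n) (p : dom U -> X), open U ->
      (forall u : dom U, exists W (hWU : W `<=` U),
          [/\ open W, W (proj1_sig u) & plot n W (restr hWU p)]) ->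
      plot n U p
}.
Set Implicit Arguments.

Definition smooth (X Y : Type) (DX : plotpred X) (DY : plotpred Y)
    (g : X -> Y) : Prop :=
  forall n (U : set 'rV[R]_n) (p : dom U -> X), DX n U p -> DY n U (g \o p).

Definition real_plot : plotpred R :=
  fun n U p => open U /\
    exists F : 'rV[R]_n -> R, smooth_on U F /\ forall u : dom U, p u = F (proj1_sig u).

Arguments real_plot n U p.

Definition sub_plot (X : Type) (D : plotpred X) (S : set X) : plotpred {x | S x} :=
  fun n U p => D n U (fun u => proj1_sig (p u)).

Arguments sub_plot {X} D S n U p.

Definition prod_plot (X Y : Type) (DX : plotpred X) (DY : plotpred Y)
  : plotpred (X * Y) :=
  fun n U p => DX n U (fun u => (p u).1) /\ DY n U (fun u => (p u).2).

Arguments prod_plot {X Y} DX DY n U p.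

Definition quot_plot (X Q : Type) (D : plotpred X) (chi : X -> Q) : plotpred Q :=
  fun n U p => open U /\
    forall u : dom U, exists W (hWU : W `<=` U),
      [/\ open W, W (proj1_sig u) &
          exists q : dom W -> X, D n W q /\
             forall w : dom W, chi (q w) = restr hWU p w].

Arguments quot_plot {X Q} D chi n U p.

Definition prodset (n m : nat) (U : set 'rV[R]_n) (U' : set 'rV[R]_m)
  : set 'rV[R]_(n + m) :=
  [set w | U (lsubmx w) /\ U' (rsubmx w)].

Definition dom_fst (n m : nat) (U : set 'rV[R]_n) (U' : set 'rV[R]_m)
  (w : dom (prodset U U')) : dom U :=
  exist _ (lsubmx (proj1_sig w)) (proj1 (proj2_sig w)).

Definition dom_snd (n m : nat) (U : set 'rV[R]_n) (U' : set 'rV[R]_m)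
  (w : dom (prodset U U')) : dom U' :=
  exist _ (rsubmx (proj1_sig w)) (proj2 (proj2_sig w)).

Definition fun_plot (A B : Type) (DA : plotpred A) (DB : plotpred B)
  : plotpred (A -> B) :=
  fun n U q => open U /\
    forall m (U' : set 'rV[R]_m) (p : dom U' -> A), DA m U' p ->
      DB (n + m)%N (prodset U U')
         (fun w => q (dom_fst w) (p (dom_snd w))).

Arguments fun_plot {A B} DA DB n U q.

(** Diffeological vector pseudo-bundle pi : V -> X.  The fibrewise operations
    are given as total maps; only their values on (pairs of elements of) a
    common fibre are constrained. *)
Record pbundle (X V : Type) (DX : diffeology X) (DV : diffeology V) := PBundle {
  proj : V -> X ;
  proj_smooth : smooth DV DX proj ;
  proj_surj : forall x : X, exists v : V, proj v = x ;
  badd : V -> V -> V ;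
  bscal : R -> V -> V ;
  bzero : X -> V ;
  badd_fibre : forall v w, proj v = proj w -> proj (badd v w) = proj v ;
  bscal_fibre : forall a v, proj (bscal a v) = proj v ;
  bzero_fibre : forall x, proj (bzero x) = x ;
  baddC : forall v w, proj v = proj w -> badd v w = badd w v ;
  baddA : forall u v w, proj u = proj v -> proj v = proj w ->
      badd u (badd v w) = badd (badd u v) w ;
  badd0 : forall v, badd (bzero (proj v)) v = v ;
  baddN : forall v, exists w, proj w = proj v /\ badd v w = bzero (proj v) ;
  bscal1 : forall v, bscal 1 v = v ;
  bscalA : forall a b v, bscal a (bscal b v) = bscal (a * b) v ;
  bscalDr : forall a v w, proj v = proj w ->
      bscal a (badd v w) = badd (bscal a v) (bscal a w) ;
  bscalDl : forall a b v, bscal (a + b) v = badd (bscal a v) (bscal b v) ;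
  badd_smooth : smooth (sub_plot (prod_plot DV DV)
                          [set vw | proj vw.1 = proj vw.2])
                       DV (fun vw => badd (proj1_sig vw).1 (proj1_sig vw).2) ;
  bscal_smooth : smooth (prod_plot real_plot DV) DV
                        (fun av => bscal av.1 av.2) ;
  bzero_smooth : smooth DX DV bzero
}.

Section Gluing.
Variables (X1 V1 X2 V2 : Type) (DX1 : diffeology X1) (DV1 : diffeology V1)
  (DX2 : diffeology X2) (DV2 : diffeology V2)
  (B1 : pbundle DX1 DV1) (B2 : pbundle DX2 DV2).

Record gluing := Gluing {
  gY : set X1 ;
  gf : {y | gY y} -> X2 ;
  gft : {v | gY (proj B1 v)} -> V2 ;
  gf_smooth : smooth (sub_plot DX1 gY) DX2 gf ;
  gft_smooth : smooth (sub_plot DV1 [set v | gY (proj B1 v)]) DV2 gft ;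
  gft_comm : forall v : {v | gY (proj B1 v)},
      proj B2 (gft v) = gf (exist _ (proj B1 (proj1_sig v)) (proj2_sig v)) ;
  gft_add : forall v w u : {v | gY (proj B1 v)},
      proj B1 (proj1_sig v) = proj B1 (proj1_sig w) -> proj1_sig u = badd B1 (proj1_sig v) (proj1_sig w) ->
      gft u = badd B2 (gft v) (gft w) ;
  gft_scal : forall (a : R) (v u : {v | gY (proj B1 v)}),
      proj1_sig u = bscal B1 a (proj1_sig v) -> gft u = bscal B2 a (gft v)
}.

Variable g : gluing.

Definition glue_rel_X (x x' : X1) : Prop :=
  x = x' \/ exists y y' : {y | gY g y},
      [/\ proj1_sig y = x, proj1_sig y' = x' & gf y = gf y'].

Definition glue_rel_V (v v' : V1) : Prop :=
  v = v' \/ exists w w' : {v | gY g (proj B1 v)},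
      [/\ proj1_sig w = v, proj1_sig w' = v' & gft w = gft w'].

(** s is an (f,ft)-invariant smooth section of V1, i.e. s lies in
    C^infinity_{(f,ft)}(X1, V1). *)
Definition inv_section (s : X1 -> V1) : Prop :=
  [/\ smooth DX1 DV1 s,
      forall x, proj B1 (s x) = x &
      forall (y y' : {y | gY g y}) (w w' : {v | gY g (proj B1 v)}),
        gf y = gf y' -> proj1_sig w = s (proj1_sig y) -> proj1_sig w' = s (proj1_sig y') ->
        gft w = gft w'].
End Gluing.

Definition is_quotient (X Q : Type) (r : X -> X -> Prop) (chi : X -> Q) : Prop :=
  (forall q : Q, exists x : X, chi x = q) /\
  (forall x x' : X, chi x = chi x' <-> r x x').

End Diffeology.

Arguments real_plot R n U p.
Arguments sub_plot {R} {X} D S n U p.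
Arguments prod_plot {R} {X Y} DX DY n U p.
Arguments quot_plot {R} {X Q} D chi n U p.
Arguments fun_plot {R} {A B} DA DB n U q.

From mathcomp Require Import all_boot all_order all_algebra.
From mathcomp Require Import all_classical all_reals all_analysis.

(** A plot of a quotient diffeology is a map that lifts locally to a plot
    upstairs, and [S1 s] is [s] read through the projections; so a local
    lift [p'] of a plot [p] of [X1^f] yields the local lift [s \o p'] of
    [S1 s \o p].  For the functional diffeology, the same lift [p'] near
    [u'] makes [(u, u') |-> q u (p' u')] a plot of [V1] lifting
    [(u, u') |-> S1 (q u) (p u')] on the product neighbourhood [U x W]. *)

Set Implicit Arguments. Unset Strict Implicit.
Import numFieldNormedType.Exports.
Local Open Scope classical_set_scope.

Section QuotientDiffeology.
Variable R : realType.

Lemma open_prodset n m (U : set 'rV[R]_n) (U' : set 'rV[R]_m) :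
  open U -> open U' -> open (prodset U U').
Proof.
move=> oU oU'; apply: openI.
- by apply: open_comp => // w _; exact: continuous_lsubmx.
- by apply: open_comp => // w _; exact: continuous_rsubmx.
Qed.

Lemma prodsetSr n m (U : set 'rV[R]_n) (W U' : set 'rV[R]_m) :
  W `<=` U' -> prodset U W `<=` prodset U U'.
Proof. by move=> WU' w [Uw Ww]; split=> //; exact: WU'. Qed.

Lemma smooth_quot (X Y QX QY : Type) (DX : plotpred R X) (DY : plotpred R Y)
    (chiX : X -> QX) (chiY : Y -> QY) (h : X -> Y) (hQ : QX -> QY) :
  smooth DX DY h -> (forall x, hQ (chiX x) = chiY (h x)) ->
  smooth (quot_plot DX chiX) (quot_plot DY chiY) hQ.
Proof.
move=> h_smooth hQE n U p [oU p_lifts]; split=> // u.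
have [W [WU [oW Wu [p' [p'_plot p'E]]]]] := p_lifts u.
exists W, WU; split=> //; exists (h \o p'); split; first exact: h_smooth.
by move=> w /=; rewrite -hQE p'E.
Qed.

Lemma fun_plot_quot (A B QA QB : Type) (DA : plotpred R A) (DB : plotpred R B)
    (chiA : A -> QA) (chiB : B -> QB) n (U : set 'rV[R]_n)
    (q : dom U -> A -> B) (qQ : dom U -> QA -> QB) :
  (forall u a, qQ u (chiA a) = chiB (q u a)) ->
  fun_plot DA DB n U q ->
  fun_plot (quot_plot DA chiA) (quot_plot DB chiB) n U qQ.
Proof.
move=> qQE [oU q_plot]; split=> // m U' p [oU' p_lifts].
split; first exact: open_prodset.
move=> w; have [W [WU' [oW Ww [p' [p'_plot p'E]]]]] := p_lifts (dom_snd w).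
exists (prodset U W), (prodsetSr (U := U) WU'); split.
- exact: open_prodset.
- by split=> //; case: (proj2_sig w).
exists (fun z => q (dom_fst z) (p' (dom_snd z))); split; first exact: q_plot.
move=> z; rewrite -qQE p'E /restr.
by congr (qQ _ (p _)); apply: eq_exist.
Qed.

End QuotientDiffeology.

Theorem theorem2p15 (R : realType) (X1 V1 X2 V2 : Type)
  (DX1 : diffeology R X1) (DV1 : diffeology R V1)
  (DX2 : diffeology R X2) (DV2 : diffeology R V2)
  (B1 : pbundle DX1 DV1) (B2 : pbundle DX2 DV2)
  (g : gluing B1 B2)
  (X1f : Type) (chiX : X1 -> X1f) (hX : is_quotient (glue_rel_X g) chiX)
  (V1f : Type) (chiV : V1 -> V1f) (hV : is_quotient (glue_rel_V g) chiV)
  (S1 : (X1 -> V1) -> (X1f -> V1f))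
  (hS1 : forall s : X1 -> V1, inv_section g s ->
           forall x : X1, S1 s (chiX x) = chiV (s x)) :
  (forall s : X1 -> V1, inv_section g s ->
     smooth (quot_plot DX1 chiX) (quot_plot DV1 chiV) (S1 s)) /\
  (forall (n : nat) (U : set 'rV[R]_n) (q : dom U -> (X1 -> V1)),
     (forall u : dom U, inv_section g (q u)) ->
     fun_plot DX1 DV1 n U q ->
     fun_plot (quot_plot DX1 chiX) (quot_plot DV1 chiV) n U (fun u => S1 (q u))).
Proof.
split=> [s s_inv | n U q q_inv].
- case: (s_inv) => s_smooth _ _; exact: smooth_quot s_smooth (hS1 s s_inv).
- exact: fun_plot_quot (fun u => hS1 (q u) (q_inv u)).
Qed.
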